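(* If $X$ is a connected, locally path connected, semi-locally simply connected space, then $$\mathrm{cat}_1(X)\le\mathsf{TC}^{\mathcal D}(X)\le\mathrm{cat}_1(X\times X).$$
   Context: $\mathrm{secat}(p)$ is the least $n$ such that the base of $p$ has an open cover by $n+1$ sets each admitting a continuous local section of $p$. The one-category $\mathrm{cat}_1(Z)$ is $\mathrm{secat}$ of the universal covering $\tilde Z\to Z$. $\mathsf{TC}^{\mathcal D}(X)$ is the least $k$ such that $X\times X=U_0\cup\dots\cup U_k$ with $U_i$ open and such that for every $i$ and every basepoint $u\in U_i$ the homomorphism $\pi_1(U_i,u)\to\pi_1(X\times X,u)\cong\pi\times\pi$ ($\pi=\pi_1(X)$) induced by inclusion takes values in a subgroup conjugate to the diagonal $\Delta\subset\pi\times\pi$. *)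

From Stdlib Require Import Reals Lra.
Open Scope R_scope.

Record Top : Type := MkTop {
  carrier :> Type;
  is_open : (carrier -> Prop) -> Prop;
  open_full : is_open (fun _ => True);
  open_inter : forall U V, is_open U -> is_open V -> is_open (fun x => U x /\ V x);
  open_union : forall F : (carrier -> Prop) -> Prop,
      (forall U, F U -> is_open U) -> is_open (fun x => exists U, F U /\ U x)
}.
Arguments is_open {t} _.

Definition prod_open (X Y : Top) (W : X * Y -> Prop) : Prop :=
  forall p, W p -> exists (A : X -> Prop) (B : Y -> Prop),
    is_open A /\ is_open B /\ A (fst p) /\ B (snd p) /\
    forall q, A (fst q) -> B (snd q) -> W q.

Lemma prod_open_full (X Y : Top) : prod_open X Y (fun _ => True).
Proof.
  intros p _. exists (fun _ => True), (fun _ => True).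
  repeat split; auto using open_full.
Qed.

Lemma prod_open_inter (X Y : Top) U V :
  prod_open X Y U -> prod_open X Y V -> prod_open X Y (fun x => U x /\ V x).
Proof.
  intros HU HV p [Up Vp].
  destruct (HU p Up) as (A1 & B1 & oA1 & oB1 & a1 & b1 & H1).
  destruct (HV p Vp) as (A2 & B2 & oA2 & oB2 & a2 & b2 & H2).
  exists (fun x => A1 x /\ A2 x), (fun y => B1 y /\ B2 y).
  repeat split; auto using open_inter; intuition.
Qed.

Lemma prod_open_union (X Y : Top) (F : (X * Y -> Prop) -> Prop) :
  (forall U, F U -> prod_open X Y U) -> prod_open X Y (fun x => exists U, F U /\ U x).
Proof.
  intros HF p [U [FU Up]].
  destruct (HF U FU p Up) as (A & B & oA & oB & a & b & H).
  exists A, B; repeat split; auto. intros q Aq Bq. exists U; auto.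
Qed.

Definition prodTop (X Y : Top) : Top :=
  @MkTop (X * Y) (prod_open X Y) (prod_open_full X Y) (@prod_open_inter X Y)
    (@prod_open_union X Y).

Definition continuous {X Y : Top} (f : X -> Y) : Prop :=
  forall V : Y -> Prop, is_open V -> is_open (fun x => V (f x)).

Definition continuous_on {X Y : Top} (U : X -> Prop) (s : X -> Y) : Prop :=
  forall x, U x -> forall V : Y -> Prop, is_open V -> V (s x) ->
    exists W : X -> Prop, is_open W /\ W x /\ forall x', W x' -> U x' -> V (s x').

Definition I01 (t : R) : Prop := 0 <= t <= 1.

(** A path: a map [0,1] -> X (values outside [0,1] are irrelevant), continuous *)
Definition is_path {X : Top} (g : R -> X) : Prop :=
  forall t, I01 t -> forall V : X -> Prop, is_open V -> V (g t) ->
    exists d, 0 < d /\ forall t', I01 t' -> Rabs (t' - t) < d -> V (g t').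

Definition path_in {X : Top} (U : X -> Prop) (g : R -> X) : Prop :=
  is_path g /\ forall t, I01 t -> U (g t).

Definition path_from_to {X : Top} (g : R -> X) (a b : X) : Prop :=
  is_path g /\ g 0 = a /\ g 1 = b.

Definition is_loop_at {X : Top} (g : R -> X) (x : X) : Prop := path_from_to g x x.

Definition path_homotopic {X : Top} (g h : R -> X) : Prop :=
  exists H : R -> R -> X,
    (forall s t, I01 s -> I01 t -> forall V : X -> Prop, is_open V -> V (H s t) ->
       exists d, 0 < d /\ forall s' t', I01 s' -> I01 t' ->
         Rabs (s' - s) < d -> Rabs (t' - t) < d -> V (H s' t')) /\
    (forall t, I01 t -> H 0 t = g t) /\
    (forall t, I01 t -> H 1 t = h t) /\
    (forall s, I01 s -> H s 0 = g 0 /\ H s 1 = g 1).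

Definition const_path {X : Top} (x : X) : R -> X := fun _ => x.

Definition concat {X : Top} (g h : R -> X) : R -> X :=
  fun t => if Rle_dec t (1/2) then g (2 * t) else h (2 * t - 1).

Definition rev_path {X : Top} (g : R -> X) : R -> X := fun t => g (1 - t).

Definition connected (X : Top) : Prop :=
  inhabited X /\
  forall U V : X -> Prop, is_open U -> is_open V ->
    (forall x, U x \/ V x) -> (forall x, ~ (U x /\ V x)) ->
    (exists x, U x) -> (exists x, V x) -> False.

Definition path_connected_set {X : Top} (W : X -> Prop) : Prop :=
  forall a b, W a -> W b -> exists g, path_from_to g a b /\ path_in W g.

Definition path_connected (X : Top) : Prop :=
  inhabited X /\ path_connected_set (fun _ : X => True).

Definition locally_path_connected (X : Top) : Prop :=
  forall (x : X) (V : X -> Prop), is_open V -> V x ->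
    exists W, is_open W /\ W x /\ (forall y, W y -> V y) /\ path_connected_set W.

Definition semilocally_simply_connected (X : Top) : Prop :=
  forall x : X, exists U : X -> Prop, is_open U /\ U x /\
    forall g, is_loop_at g x -> path_in U g -> path_homotopic g (const_path x).

Definition simply_connected (X : Top) : Prop :=
  path_connected X /\
  forall (x : X) g, is_loop_at g x -> path_homotopic g (const_path x).

Definition evenly_covered {E Z : Top} (p : E -> Z) (V : Z -> Prop) : Prop :=
  exists F : (E -> Prop) -> Prop,
    (forall S, F S -> is_open S) /\
    (forall S S', F S -> F S' -> (forall e, S e <-> S' e) \/ (forall e, ~ (S e /\ S' e))) /\
    (forall e, V (p e) <-> exists S, F S /\ S e) /\
    (forall S, F S -> exists s : Z -> E,
        continuous_on V s /\
        (forall z, V z -> S (s z) /\ p (s z) = z) /\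
        (forall e, S e -> s (p e) = e)).

Definition covering_map {E Z : Top} (p : E -> Z) : Prop :=
  continuous p /\ (forall z, exists e, p e = z) /\
  forall z : Z, exists V, is_open V /\ V z /\ evenly_covered p V.

Definition universal_covering {E Z : Top} (p : E -> Z) : Prop :=
  covering_map p /\ simply_connected E.

(** * Sectional category, cat_1, TC^D  (as "<= n" predicates; values may be infinite) *)
Definition secat_le {E Z : Top} (p : E -> Z) (n : nat) : Prop :=
  exists U : nat -> (Z -> Prop),
    (forall i, (i <= n)%nat -> is_open (U i)) /\
    (forall z, exists i, (i <= n)%nat /\ U i z) /\
    (forall i, (i <= n)%nat -> exists s : Z -> E,
        continuous_on (U i) s /\ forall z, U i z -> p (s z) = z).

Definition cat1_le (Z : Top) (n : nat) : Prop :=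
  exists (E : Top) (p : E -> Z), universal_covering p /\ secat_le p n.

(** pi_1(U_i,u) -> pi_1(X x X,u) = pi_1(X,a) x pi_1(X,b) (u = (a,b)) lands in a
    conjugate of the diagonal. Conjugates of the diagonal are exactly the graphs
    of the isomorphisms [g] |-> [c]^{-1}[g][c], c a path from a to b. *)
Definition diag_conj_condition (X : Top) (U : prodTop X X -> Prop) (u : prodTop X X) : Prop :=
  exists c : R -> X, path_from_to c (fst u) (snd u) /\
    forall l : R -> prodTop X X, is_loop_at l u -> path_in U l ->
      path_homotopic (fun t => snd (l t))
                     (concat (concat (rev_path c) (fun t => fst (l t))) c).

Definition TCD_le (X : Top) (k : nat) : Prop :=
  exists U : nat -> (prodTop X X -> Prop),
    (forall i, (i <= k)%nat -> is_open (U i)) /\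
    (forall u, exists i, (i <= k)%nat /\ U i u) /\
    (forall i, (i <= k)%nat -> forall u, U i u -> diag_conj_condition X (U i) u).

From Stdlib Require Import Reals Lra Psatz.
From Stdlib Require Import Classical ClassicalEpsilon FunctionalExtensionality.
From Stdlib Require Import PropExtensionality ProofIrrelevance.
Open Scope R_scope.

(* The universal covering of [X] is built as the space of homotopy classes of
   paths from a base point [x0], projected to their endpoints; its basic open
   sets extend a class by the paths inside a small open set of [X].  It is simply
   connected because paths and their homotopies lift to it, and lifts of paths
   are unique.

   If an open [U] of [X * X] satisfies the diagonal condition, a loop [l] in the
   slice [V = {x | (x, x0) in U}] yields the loop [(l, x0)] of [U], so [l] is
   conjugate to a constant loop, hence null in [X].  Over such a [V] the
   universal covering has a section, which gives cat_1(X) <= TC^D(X).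

   Conversely, a section [s] of a universal covering of [X * X] over [U] lifts a
   loop of [U] to a null loop of the total space, so both components of the loop
   are null in [X]; then they are conjugate by any path joining the two
   coordinates of the base point, which gives TC^D(X) <= cat_1(X * X). *)

Lemma I01_0 : I01 0.
Proof. unfold I01; lra. Qed.

Lemma I01_1 : I01 1.
Proof. unfold I01; lra. Qed.

Lemma I01_double s : I01 s -> s <= 1/2 -> I01 (2 * s).
Proof. unfold I01; lra. Qed.

Lemma I01_double_sub s : I01 s -> ~ s <= 1/2 -> I01 (2 * s - 1).
Proof. unfold I01; lra. Qed.

Lemma I01_opp s : I01 s -> I01 (1 - s).
Proof. unfold I01; lra. Qed.

Lemma Rabs_sub_opp a b : Rabs ((1 - a) - (1 - b)) = Rabs (a - b).
Proof. rewrite <- Rabs_Ropp. f_equal. ring. Qed.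

(** * Paths and path homotopies *)

Section Paths.
Context {X : Top}.

Definition jointly_continuous (H : R -> R -> X) : Prop :=
  forall s t, I01 s -> I01 t -> forall V : X -> Prop, is_open V -> V (H s t) ->
    exists d, 0 < d /\ forall s' t', I01 s' -> I01 t' ->
      Rabs (s' - s) < d -> Rabs (t' - t) < d -> V (H s' t').

Lemma path_jointly_continuous (g : R -> X) : is_path g -> jointly_continuous (fun _ t => g t).
Proof.
  intros Hg s t _ It V HV Vt. destruct (Hg t It V HV Vt) as [d [dp Hd]].
  exists d; split; auto.
Qed.

Lemma jointly_continuous_swap (H : R -> R -> X) :
  jointly_continuous H -> jointly_continuous (fun s t => H t s).
Proof.
  intros HH s t Is It V HV Vt. destruct (HH t s It Is V HV Vt) as [d [dp Hd]].
  exists d; split; auto.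
Qed.

Lemma jointly_continuous_row (H : R -> R -> X) s :
  jointly_continuous H -> I01 s -> is_path (fun t => H s t).
Proof.
  intros HH Is t It V HV Vt. destruct (HH s t Is It V HV Vt) as [d [dp Hd]].
  exists d; split; auto. intros t' It' Ht. apply Hd; auto.
  unfold Rminus; rewrite Rplus_opp_r, Rabs_R0; auto.
Qed.

Lemma jointly_continuous_col (H : R -> R -> X) t :
  jointly_continuous H -> I01 t -> is_path (fun s => H s t).
Proof.
  intros HH It. apply (jointly_continuous_row (fun s t => H t s)); auto.
  apply jointly_continuous_swap; auto.
Qed.

Lemma jointly_continuous_glue_fst (A B : R -> R -> X) :
  jointly_continuous A -> jointly_continuous B -> (forall t, I01 t -> A 1 t = B 0 t) ->
  jointly_continuous (fun s t => if Rle_dec s (1/2) then A (2 * s) t else B (2 * s - 1) t).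
Proof.
  intros HA HB Hm s t Is It V HV Vt.
  (* each half is controlled near s, and vacuously so when s lies strictly on the other side *)
  assert (Left : exists d, 0 < d /\ forall s' t', I01 s' -> I01 t' -> Rabs (s' - s) < d ->
                Rabs (t' - t) < d -> s' <= 1/2 -> V (A (2 * s') t')).
  { destruct (Rle_dec s (1/2)) as [Hs|Hs].
    - assert (VA : V (A (2 * s) t)).
      { destruct (Rle_dec s (1/2)); [auto|lra]. }
      destruct (HA (2 * s) t (I01_double s Is Hs) It V HV VA) as [d [dp Hd]].
      exists (d / 2); split; [lra|]. intros s' t' Is' It' Hs' Ht' Hle.
      apply Rabs_def2 in Hs'. apply Hd; auto using I01_double.
      apply Rabs_def1; lra. lra.
    - exists (s - 1/2); split; [lra|]. intros s' t' _ _ Hs' _ Hle.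
      apply Rabs_def2 in Hs'. lra. }
  assert (Right : exists d, 0 < d /\ forall s' t', I01 s' -> I01 t' -> Rabs (s' - s) < d ->
                Rabs (t' - t) < d -> ~ s' <= 1/2 -> V (B (2 * s' - 1) t')).
  { destruct (Rle_dec s (1/2)) as [Hs|Hs].
    - destruct (Req_dec s (1/2)) as [Eh|Hne].
      + subst s. destruct (Rle_dec (1/2) (1/2)) as [_|]; [|lra].
        replace (2 * (1/2)) with 1 in Vt by lra. rewrite Hm in Vt by auto.
        destruct (HB 0 t I01_0 It V HV Vt) as [d [dp Hd]].
        exists (d / 2); split; [lra|]. intros s' t' Is' It' Hs' Ht' Hgt.
        apply Rabs_def2 in Hs'. apply Hd; auto using I01_double_sub.
        apply Rabs_def1; lra. lra.
      + exists (1/2 - s); split; [lra|]. intros s' t' _ _ Hs' _ Hgt.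
        apply Rabs_def2 in Hs'. lra.
    - assert (VB : V (B (2 * s - 1) t)).
      { destruct (Rle_dec s (1/2)); [lra|auto]. }
      destruct (HB (2 * s - 1) t (I01_double_sub s Is Hs) It V HV VB) as [d [dp Hd]].
      exists (d / 2); split; [lra|]. intros s' t' Is' It' Hs' Ht' Hgt.
      apply Rabs_def2 in Hs'. apply Hd; auto using I01_double_sub.
      apply Rabs_def1; lra. lra. }
  destruct Left as [d1 [d1p H1]]. destruct Right as [d2 [d2p H2]].
  exists (Rmin d1 d2); split; [apply Rmin_pos; auto|].
  intros s' t' Is' It' Hs' Ht'.
  pose proof (Rmin_l d1 d2). pose proof (Rmin_r d1 d2).
  destruct (Rle_dec s' (1/2)).
  - apply H1; auto; lra.
  - apply H2; auto; lra.
Qed.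

Lemma jointly_continuous_glue_snd (A B : R -> R -> X) :
  jointly_continuous A -> jointly_continuous B -> (forall s, I01 s -> A s 1 = B s 0) ->
  jointly_continuous (fun s t => if Rle_dec t (1/2) then A s (2 * t) else B s (2 * t - 1)).
Proof.
  intros HA HB Hm.
  apply (jointly_continuous_swap
           (fun t s => if Rle_dec t (1/2) then A s (2 * t) else B s (2 * t - 1))).
  apply (jointly_continuous_glue_fst (fun t s => A s t) (fun t s => B s t));
    auto using jointly_continuous_swap.
Qed.

Lemma path_ext (g h : R -> X) : is_path g -> (forall t, I01 t -> g t = h t) -> is_path h.
Proof.
  intros Hg E t It V HV Vt. rewrite <- E in Vt by auto.
  destruct (Hg t It V HV Vt) as [d [dp Hd]]. exists d; split; auto.
  intros t' It' Ht. rewrite <- E by auto. auto.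
Qed.

Lemma const_path_path (x : X) : is_path (const_path x).
Proof. intros t It V HV Vt. exists 1; split; [lra|auto]. Qed.

Lemma concat_path (g h : R -> X) : is_path g -> is_path h -> g 1 = h 0 -> is_path (concat g h).
Proof.
  intros Hg Hh E.
  apply (jointly_continuous_col
           (fun s _ => if Rle_dec s (1/2) then g (2 * s) else h (2 * s - 1)) 0);
    [|exact I01_0].
  apply (jointly_continuous_glue_fst (fun s _ => g s) (fun s _ => h s)); auto;
    apply jointly_continuous_swap, path_jointly_continuous; auto.
Qed.

Lemma rev_path_path (g : R -> X) : is_path g -> is_path (rev_path g).
Proof.
  intros Hg t It V HV Vt.
  destruct (Hg (1 - t) (I01_opp t It) V HV Vt) as [d [dp Hd]].
  exists d; split; auto. intros t' It' Ht. apply Hd; auto using I01_opp.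
  rewrite Rabs_sub_opp; auto.
Qed.

Lemma concat_0 (g h : R -> X) : concat g h 0 = g 0.
Proof. unfold concat. destruct (Rle_dec 0 (1/2)); [|lra]. f_equal; lra. Qed.

Lemma concat_1 (g h : R -> X) : concat g h 1 = h 1.
Proof. unfold concat. destruct (Rle_dec 1 (1/2)); [lra|]. f_equal; lra. Qed.

Lemma rev_path_0 (g : R -> X) : rev_path g 0 = g 1.
Proof. unfold rev_path. f_equal; lra. Qed.

Lemma rev_path_1 (g : R -> X) : rev_path g 1 = g 0.
Proof. unfold rev_path. f_equal; lra. Qed.

Lemma rev_pathK (g : R -> X) : rev_path (rev_path g) = g.
Proof. apply functional_extensionality; intro t. unfold rev_path. f_equal; ring. Qed.

Lemma path_in_mono (U V : X -> Prop) g :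
  (forall x, U x -> V x) -> path_in U g -> path_in V g.
Proof. intros HUV [Pg Ug]. split; auto. Qed.

Lemma path_in_const (W : X -> Prop) x : W x -> path_in W (const_path x).
Proof. split; [apply const_path_path|auto]. Qed.

Lemma path_in_concat (W : X -> Prop) g h :
  path_in W g -> path_in W h -> g 1 = h 0 -> path_in W (concat g h).
Proof.
  intros [Pg Wg] [Ph Wh] E. split; [apply concat_path; auto|].
  intros t It. unfold concat. destruct (Rle_dec t (1/2)).
  - apply Wg, I01_double; auto.
  - apply Wh, I01_double_sub; auto.
Qed.

Lemma path_in_rev (W : X -> Prop) g : path_in W g -> path_in W (rev_path g).
Proof.
  intros [Pg Wg]. split; [apply rev_path_path; auto|].
  intros t It. apply Wg, I01_opp; auto.
Qed.

Lemma continuous_path {Y : Top} (f : X -> Y) g :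
  continuous f -> is_path g -> is_path (fun t => f (g t)).
Proof.
  intros Hf Hg t It V HV Vt. destruct (Hg t It _ (Hf V HV) Vt) as [d [dp Hd]].
  exists d; split; auto.
Qed.

Lemma continuous_on_path {Y : Top} (U : X -> Prop) (s : X -> Y) g :
  continuous_on U s -> path_in U g -> is_path (fun t => s (g t)).
Proof.
  intros Hs [Pg Ug] t It V HV Vt.
  destruct (Hs (g t) (Ug t It) V HV Vt) as [W [oW [Wt HW]]].
  destruct (Pg t It W oW Wt) as [d [dp Hd]].
  exists d; split; auto.
Qed.

Lemma hom_refl (g : R -> X) : is_path g -> path_homotopic g g.
Proof.
  intros Hg. exists (fun _ t => g t).
  split; [apply path_jointly_continuous; auto|auto].
Qed.

Lemma hom_ends (g h : R -> X) : path_homotopic g h ->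
  is_path g /\ is_path h /\ h 0 = g 0 /\ h 1 = g 1.
Proof.
  intros [H [HC [H0 [H1 Hb]]]].
  split; [|split; [|split]].
  - apply (path_ext (fun t => H 0 t)); auto. apply jointly_continuous_row; auto using I01_0.
  - apply (path_ext (fun t => H 1 t)); auto. apply jointly_continuous_row; auto using I01_1.
  - rewrite <- H1 by exact I01_0. apply Hb, I01_1.
  - rewrite <- H1 by exact I01_1. apply Hb, I01_1.
Qed.

Lemma hom_sym (g h : R -> X) : path_homotopic g h -> path_homotopic h g.
Proof.
  intros Hgh. destruct (hom_ends _ _ Hgh) as [_ [_ [E0 E1]]].
  destruct Hgh as [H [HC [H0 [H1 Hb]]]].
  exists (fun s t => H (1 - s) t). split; [|split; [|split]].
  - intros s t Is It V HV Vt.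
    destruct (HC (1 - s) t (I01_opp s Is) It V HV Vt) as [d [dp Hd]].
    exists d; split; auto. intros s' t' Is' It' Hs Ht.
    apply Hd; auto using I01_opp. rewrite Rabs_sub_opp; auto.
  - intros t It. replace (1 - 0) with 1 by ring. auto.
  - intros t It. replace (1 - 1) with 0 by ring. auto.
  - intros s Is. rewrite E0, E1. apply Hb, I01_opp; auto.
Qed.

Lemma hom_trans (f g h : R -> X) :
  path_homotopic f g -> path_homotopic g h -> path_homotopic f h.
Proof.
  intros Hfg Hgh. destruct (hom_ends _ _ Hfg) as [_ [_ [E0 E1]]].
  destruct Hfg as [A [AC [A0 [A1 Ab]]]]. destruct Hgh as [B [BC [B0 [B1 Bb]]]].
  exists (fun s t => if Rle_dec s (1/2) then A (2 * s) t else B (2 * s - 1) t).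
  split; [|split; [|split]].
  - apply jointly_continuous_glue_fst; auto. intros t It. rewrite A1, B0; auto.
  - intros t It. destruct (Rle_dec 0 (1/2)); [|lra]. rewrite Rmult_0_r. auto.
  - intros t It. destruct (Rle_dec 1 (1/2)); [lra|]. replace (2 * 1 - 1) with 1 by ring. auto.
  - intros s Is. destruct (Rle_dec s (1/2)) as [Hs|Hs].
    + apply Ab, I01_double; auto.
    + rewrite <- E0, <- E1. apply Bb, I01_double_sub; auto.
Qed.

Lemma hom_ext_r (g h h' : R -> X) :
  path_homotopic g h -> (forall t, I01 t -> h t = h' t) -> path_homotopic g h'.
Proof.
  intros [H [HC [H0 [H1 Hb]]]] E. exists H. split; [|split; [|split]]; auto.
  intros t It. rewrite H1; auto.
Qed.

Lemma hom_ext_l (g g' h : R -> X) :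
  path_homotopic g h -> (forall t, I01 t -> g t = g' t) -> path_homotopic g' h.
Proof.
  intros Hgh E. apply hom_sym, (hom_ext_r _ g); auto. apply hom_sym; auto.
Qed.

Lemma hom_concat (g g' h h' : R -> X) : path_homotopic g g' -> path_homotopic h h' ->
  g 1 = h 0 -> path_homotopic (concat g h) (concat g' h').
Proof.
  intros Hg Hh E.
  destruct Hg as [A [AC [A0 [A1 Ab]]]]. destruct Hh as [B [BC [B0 [B1 Bb]]]].
  exists (fun s t => if Rle_dec t (1/2) then A s (2 * t) else B s (2 * t - 1)).
  split; [|split; [|split]].
  - apply jointly_continuous_glue_snd; auto.
    intros s Is. destruct (Ab s Is), (Bb s Is). congruence.
  - intros t It. unfold concat. destruct (Rle_dec t (1/2)).
    + apply A0, I01_double; auto.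
    + apply B0, I01_double_sub; auto.
  - intros t It. unfold concat. destruct (Rle_dec t (1/2)).
    + apply A1, I01_double; auto.
    + apply B1, I01_double_sub; auto.
  - intros s Is. rewrite concat_0, concat_1.
    destruct (Rle_dec 0 (1/2)); [|lra]. destruct (Rle_dec 1 (1/2)); [lra|].
    rewrite Rmult_0_r. replace (2 * 1 - 1) with 1 by ring. split; apply Ab || apply Bb; auto.
Qed.

Lemma hom_map {Y : Top} (f : X -> Y) (g h : R -> X) : continuous f -> path_homotopic g h ->
  path_homotopic (fun t => f (g t)) (fun t => f (h t)).
Proof.
  intros Hf [H [HC [H0 [H1 Hb]]]].
  exists (fun s t => f (H s t)). split; [|split; [|split]].
  - intros s t Is It V HV Vt. destruct (HC s t Is It _ (Hf V HV) Vt) as [d [dp Hd]].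
    exists d; split; auto.
  - intros t It. rewrite H0; auto.
  - intros t It. rewrite H1; auto.
  - intros s Is. destruct (Hb s Is) as [E0 E1]. rewrite E0, E1. auto.
Qed.

End Paths.

(** * Paths in the unit square *)

Definition R_open (U : R -> Prop) : Prop :=
  forall x, U x -> exists e, 0 < e /\ forall y, Rabs (y - x) < e -> U y.

Lemma R_open_full : R_open (fun _ => True).
Proof. intros x _. exists 1; split; [lra|auto]. Qed.

Lemma R_open_inter U V : R_open U -> R_open V -> R_open (fun x => U x /\ V x).
Proof.
  intros HU HV x [Ux Vx].
  destruct (HU x Ux) as [e1 [e1p H1]]. destruct (HV x Vx) as [e2 [e2p H2]].
  exists (Rmin e1 e2); split; [apply Rmin_pos; auto|].
  intros y Hy. pose proof (Rmin_l e1 e2). pose proof (Rmin_r e1 e2).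
  split; [apply H1|apply H2]; lra.
Qed.

Lemma R_open_union (F : (R -> Prop) -> Prop) :
  (forall U, F U -> R_open U) -> R_open (fun x => exists U, F U /\ U x).
Proof.
  intros HF x [U [FU Ux]]. destruct (HF U FU x Ux) as [e [ep H]].
  exists e; split; auto. intros y Hy. exists U; auto.
Qed.

Definition R_top : Top := MkTop R R_open R_open_full R_open_inter R_open_union.

Notation interval_path a := (@path_in R_top I01 a).

Lemma R_open_ball c e : @is_open R_top (fun y => Rabs (y - c) < e).
Proof.
  simpl. intros y Hy. exists (e - Rabs (y - c)); split; [lra|].
  intros z Hz. replace (z - c) with ((z - y) + (y - c)) by ring.
  eapply Rle_lt_trans; [apply Rabs_triang|lra].
Qed.

Lemma R_path_cont (a : R -> R) : @is_path R_top a ->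
  forall t, I01 t -> forall e, 0 < e -> exists d, 0 < d /\
    forall t', I01 t' -> Rabs (t' - t) < d -> Rabs (a t' - a t) < e.
Proof.
  intros Ha t It e ep. apply (Ha t It _ (R_open_ball (a t) e)).
  unfold Rminus. rewrite Rplus_opp_r, Rabs_R0; auto.
Qed.

Lemma R_jointly_continuous_intro (u : R -> R -> R) :
  (forall s t, I01 s -> I01 t -> forall e, 0 < e -> exists d, 0 < d /\
     forall s' t', I01 s' -> I01 t' -> Rabs (s' - s) < d -> Rabs (t' - t) < d ->
       Rabs (u s' t' - u s t) < e) ->
  @jointly_continuous R_top u.
Proof.
  intros H s t Is It V HV Vt. destruct (HV _ Vt) as [e [ep He]].
  destruct (H s t Is It e ep) as [d [dp Hd]]. exists d; split; auto.
Qed.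

Lemma R_path_lipschitz (a : R -> R) (M : R) :
  0 <= M -> (forall u v, Rabs (a u - a v) <= M * Rabs (u - v)) -> @is_path R_top a.
Proof.
  intros HM H t It V HV Vt. destruct (HV _ Vt) as [e [ep He]].
  exists (e / (M + 1)); split; [apply Rdiv_lt_0_compat; lra|].
  intros t' It' Ht. apply He. eapply Rle_lt_trans; [apply H|].
  apply (Rmult_lt_compat_r (M + 1)) in Ht; [|lra].
  unfold Rdiv in Ht. rewrite Rmult_assoc, Rinv_l in Ht by lra.
  pose proof (Rabs_pos (t' - t)). nra.
Qed.

Definition segment (a b : R) : R -> R := fun u => a + u * (b - a).

Lemma segment_0 a b : segment a b 0 = a.
Proof. unfold segment; ring. Qed.

Lemma segment_1 a b : segment a b 1 = b.
Proof. unfold segment; ring. Qed.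

Lemma segment_I01 a b u : I01 a -> I01 b -> I01 u -> I01 (segment a b u).
Proof. unfold I01, segment. intros. split; nra. Qed.

Lemma segment_near a b u d : I01 u -> Rabs (b - a) < d -> Rabs (segment a b u - a) < d.
Proof.
  intros Iu H. unfold segment. replace (a + u * (b - a) - a) with (u * (b - a)) by ring.
  rewrite Rabs_mult. unfold I01 in Iu. rewrite (Rabs_right u) by lra.
  pose proof (Rabs_pos (b - a)). nra.
Qed.

Lemma segment_interval_path a b : I01 a -> I01 b -> interval_path (segment a b).
Proof.
  intros Ia Ib; split; [|intros; apply segment_I01; auto].
  apply (R_path_lipschitz _ (Rabs (b - a))); [apply Rabs_pos|].
  intros u v. unfold segment.
  replace (a + u * (b - a) - (a + v * (b - a))) with ((b - a) * (u - v)) by ring.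
  rewrite Rabs_mult. lra.
Qed.

Lemma const_interval_path c : I01 c -> interval_path (fun _ => c).
Proof. exact (path_in_const (X := R_top) I01 c). Qed.

Lemma id_interval_path : interval_path (fun t => t).
Proof.
  split; auto. apply (R_path_lipschitz _ 1); [lra|]. intros; lra.
Qed.

Ltac interval_facts := repeat match goal with
  | |- @eq _ _ _ =>
      rewrite ?(concat_0 (X := R_top)), ?(concat_1 (X := R_top)), ?segment_0, ?segment_1;
      congruence
  | |- I01 _ => first [exact I01_0 | exact I01_1 | assumption]
  | |- @path_in R_top I01 (@concat R_top _ _) => apply path_in_concat
  | |- @path_in R_top I01 (segment _ _) => apply segment_interval_path
  | |- @path_in R_top I01 _ =>
      first [assumption | apply id_interval_path | apply const_interval_path]
  end.

Lemma segment_homotopy_jointly_continuous (a b : R -> R) :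
  interval_path a -> interval_path b ->
  @jointly_continuous R_top (fun s t => segment (a t) (b t) s).
Proof.
  intros [Pa Ia] [Pb Ib]. apply R_jointly_continuous_intro. intros s t Is It e ep.
  destruct (R_path_cont a Pa t It (e / 3) ltac:(lra)) as [d1 [d1p H1]].
  destruct (R_path_cont b Pb t It (e / 3) ltac:(lra)) as [d2 [d2p H2]].
  set (d := Rmin (e / 3) (Rmin d1 d2)).
  assert (dp : 0 < d) by (repeat apply Rmin_pos; lra).
  assert (de : d <= e / 3) by apply Rmin_l.
  assert (dd1 : d <= d1) by (eapply Rle_trans; [apply Rmin_r|apply Rmin_l]).
  assert (dd2 : d <= d2) by (eapply Rle_trans; [apply Rmin_r|apply Rmin_r]).
  exists d; split; auto. intros s' t' Is' It' Hs Ht.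
  assert (Ha : Rabs (a t' - a t) < e / 3) by (apply H1; auto; lra).
  assert (Hb : Rabs (b t' - b t) < e / 3) by (apply H2; auto; lra).
  specialize (Ia t It). specialize (Ib t It). unfold I01, segment in *.
  apply Rabs_def2 in Hs. apply Rabs_def2 in Ha. apply Rabs_def2 in Hb.
  apply Rabs_def1; nra.
Qed.

Lemma I01_connected (A : R -> Prop) : A 0 ->
  (forall t, I01 t -> exists d, 0 < d /\
     forall t', I01 t' -> Rabs (t' - t) < d -> (A t' <-> A t)) ->
  forall t, I01 t -> A t.
Proof.
  intros A0 HL.
  (* the supremum [m] of the initial segments of [0,1] on which [A] holds is [1] *)
  set (S := fun t => 0 <= t <= 1 /\ forall u, 0 <= u <= t -> A u).
  assert (bS : bound S) by (exists 1; intros t [Ht _]; lra).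
  assert (S0 : S 0) by (split; [lra|intros u Hu; replace u with 0 by lra; auto]).
  destruct (completeness S bS (ex_intro _ 0 S0)) as [m [ubm lubm]].
  assert (Im : I01 m) by (split; [apply ubm; auto|apply lubm; intros t [Ht _]; lra]).
  destruct (HL m Im) as [d [dp Hd]].
  assert (Ex : exists t1, S t1 /\ m - d < t1).
  { apply NNPP; intro Hn. assert (m <= m - d); [|lra].
    apply lubm. intros t St. apply Rnot_lt_le. intro Hlt. apply Hn. exists t; auto. }
  destruct Ex as [t1 [[It1 St1] Ht1]].
  assert (t1m : t1 <= m) by (apply ubm; split; auto).
  assert (Am : A m) by (apply (Hd t1); [unfold I01; lra|apply Rabs_def1; lra|apply St1; lra]).
  assert (Hall : forall u, I01 u -> u < m + d -> A u).
  { intros u Iu Hu. destruct (Rle_dec u t1); [apply St1; unfold I01 in Iu; lra|].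
    apply (Hd u Iu); auto. apply Rabs_def1; lra. }
  assert (m1 : m = 1).
  { destruct (Req_dec m 1) as [|Hne]; auto. exfalso.
    set (t2 := Rmin 1 (m + d/2)).
    assert (t2 <= 1) by apply Rmin_l. assert (t2 <= m + d/2) by apply Rmin_r.
    assert (m < t2) by (unfold t2, Rmin, I01 in *; destruct (Rle_dec 1 (m + d/2)); lra).
    assert (S t2) by (split; [unfold I01 in *; lra|intros u Hu; apply Hall; unfold I01; lra]).
    assert (t2 <= m) by (apply ubm; auto). lra. }
  intros t It. apply Hall; auto. unfold I01 in It; lra.
Qed.

Section Square.
Context {X : Top}.

Lemma jointly_continuous_comp (F : R -> R -> X) (u v : R -> R -> R) :
  jointly_continuous F -> @jointly_continuous R_top u -> @jointly_continuous R_top v ->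
  (forall s t, I01 s -> I01 t -> I01 (u s t) /\ I01 (v s t)) ->
  jointly_continuous (fun s t => F (u s t) (v s t)).
Proof.
  intros HF Hu Hv Huv s t Is It V HV Vt. destruct (Huv s t Is It) as [Iu Iv].
  destruct (HF _ _ Iu Iv V HV Vt) as [d [dp Hd]].
  assert (centre : forall c, Rabs (c - c) < d).
  { intros c. unfold Rminus. rewrite Rplus_opp_r, Rabs_R0; auto. }
  destruct (Hu s t Is It _ (R_open_ball (u s t) d) (centre _)) as [d1 [d1p H1]].
  destruct (Hv s t Is It _ (R_open_ball (v s t) d) (centre _)) as [d2 [d2p H2]].
  exists (Rmin d1 d2); split; [apply Rmin_pos; auto|].
  intros s' t' Is' It' Hs Ht. pose proof (Rmin_l d1 d2). pose proof (Rmin_r d1 d2).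
  destruct (Huv s' t' Is' It'). apply Hd; auto; [apply H1|apply H2]; auto; lra.
Qed.

Lemma square_path (F : R -> R -> X) a1 a2 :
  jointly_continuous F -> interval_path a1 -> interval_path a2 ->
  is_path (fun t => F (a1 t) (a2 t)).
Proof.
  intros HF [P1 I1] [P2 I2].
  apply (jointly_continuous_row (fun _ t => F (a1 t) (a2 t)) 0); [|exact I01_0].
  apply (jointly_continuous_comp F (fun _ t => a1 t) (fun _ t => a2 t));
    auto using path_jointly_continuous.
Qed.

(* The straight-line homotopy in the (convex) unit square. *)
Lemma square_homotopic (F : R -> R -> X) a1 a2 b1 b2 : jointly_continuous F ->
  interval_path a1 -> interval_path a2 -> interval_path b1 -> interval_path b2 ->
  a1 0 = b1 0 -> a2 0 = b2 0 -> a1 1 = b1 1 -> a2 1 = b2 1 ->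
  path_homotopic (fun t => F (a1 t) (a2 t)) (fun t => F (b1 t) (b2 t)).
Proof.
  intros HF A1 A2 B1 B2 E1 E2 E3 E4.
  exists (fun s t => F (segment (a1 t) (b1 t) s) (segment (a2 t) (b2 t) s)).
  split; [|split; [|split]].
  - apply jointly_continuous_comp; auto using segment_homotopy_jointly_continuous.
    intros s t Is It. destruct A1 as [_ I1], A2 as [_ I2], B1 as [_ J1], B2 as [_ J2].
    split; apply segment_I01; auto.
  - intros t It. rewrite !segment_0. reflexivity.
  - intros t It. rewrite !segment_1. reflexivity.
  - intros s Is. unfold segment. rewrite E1, E2, E3, E4. split; f_equal; ring.
Qed.

Lemma reparam_homotopic (g : R -> X) phi psi :
  is_path g -> interval_path phi -> interval_path psi -> phi 0 = psi 0 -> phi 1 = psi 1 ->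
  path_homotopic (fun t => g (phi t)) (fun t => g (psi t)).
Proof.
  intros Hg Hphi Hpsi E0 E1.
  exact (square_homotopic (fun _ t => g t) (fun _ => 0) phi (fun _ => 0) psi
           (path_jointly_continuous g Hg) (path_in_const _ _ I01_0) Hphi
           (path_in_const _ _ I01_0) Hpsi eq_refl E0 eq_refl E1).
Qed.

End Square.

(** * The fundamental groupoid *)

Section Groupoid.
Context {X : Top}.
Implicit Types f g h k c l : R -> X.

Lemma concat_comp g (a b : R -> R) :
  concat (fun t => g (a t)) (fun t => g (b t)) = fun t => g (@concat R_top a b t).
Proof.
  apply functional_extensionality; intro t. unfold concat. destruct (Rle_dec t (1/2)); auto.
Qed.

Lemma hom_concat_reparam g (a b psi : R -> R) : is_path g ->
  interval_path a -> interval_path b -> interval_path psi ->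
  a 1 = b 0 -> a 0 = psi 0 -> b 1 = psi 1 ->
  path_homotopic (concat (fun t => g (a t)) (fun t => g (b t))) (fun t => g (psi t)).
Proof.
  intros Hg Ha Hb Hpsi E E0 E1. rewrite concat_comp.
  apply reparam_homotopic; auto; interval_facts.
Qed.

Lemma hom_concat_const_l g : is_path g -> path_homotopic (concat (const_path (g 0)) g) g.
Proof.
  intros Hg.
  apply (hom_concat_reparam g (fun _ => 0) (fun t => t) (fun t => t));
    auto; interval_facts.
Qed.

Lemma hom_concat_const_r g : is_path g -> path_homotopic (concat g (const_path (g 1))) g.
Proof.
  intros Hg.
  apply (hom_concat_reparam g (fun t => t) (fun _ => 1) (fun t => t));
    auto; interval_facts.
Qed.

Lemma hom_concat_rev_r g : is_path g -> path_homotopic (concat g (rev_path g)) (const_path (g 0)).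
Proof.
  intros Hg.
  apply (hom_concat_reparam g (fun t => t) (fun t => 1 - t) (fun _ => 0));
    auto; interval_facts; try lra.
  exact (path_in_rev (X := R_top) I01 _ id_interval_path).
Qed.

Lemma hom_concat_rev_l g : is_path g -> path_homotopic (concat (rev_path g) g) (const_path (g 1)).
Proof.
  intros Hg.
  apply (hom_concat_reparam g (fun t => 1 - t) (fun t => t) (fun _ => 1));
    auto; interval_facts; try lra.
  exact (path_in_rev (X := R_top) I01 _ id_interval_path).
Qed.

Lemma hom_concat_assoc f g h : is_path f -> is_path g -> is_path h -> f 1 = g 0 -> g 1 = h 0 ->
  path_homotopic (concat (concat f g) h) (concat f (concat g h)).
Proof.
  intros Hf Hg Hh E1 E2.
  set (k := concat f (concat g h)).
  set (phi := @concat R_top (@concat R_top (segment 0 (1/2)) (segment (1/2) (3/4)))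
                            (segment (3/4) 1)).
  assert (E : concat (concat f g) h = fun t => k (phi t)).
  { apply functional_extensionality; intro t. unfold k, phi, concat, segment.
    repeat match goal with |- context [Rle_dec ?a ?b] => destruct (Rle_dec a b) end;
    try (exfalso; lra); f_equal; lra. }
  assert (I01_quarters : I01 (1/2) /\ I01 (3/4)) by (unfold I01; lra).
  destruct I01_quarters.
  rewrite E. apply (reparam_homotopic k phi (fun t => t)); unfold phi; interval_facts.
  unfold k. apply concat_path; auto. apply concat_path; auto. rewrite concat_0; auto.
Qed.

Ltac path_facts := repeat first
  [ assumption | apply concat_path | apply rev_path_path | apply const_path_path
  | rewrite concat_0 | rewrite concat_1 | rewrite rev_path_0 | rewrite rev_path_1
  | reflexivity ].

Lemma hom_concat_cancel_l a g h : is_path a -> is_path g -> is_path h -> a 1 = g 0 -> a 1 = h 0 ->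
  path_homotopic (concat a g) (concat a h) -> path_homotopic g h.
Proof.
  intros Ha Hg Hh Eg Eh H.
  apply hom_trans with (concat (const_path (g 0)) g); [apply hom_sym, hom_concat_const_l; auto|].
  apply hom_trans with (concat (concat (rev_path a) a) g).
  { apply hom_concat; [rewrite <- Eg; apply hom_sym, hom_concat_rev_l; auto
                      |apply hom_refl; auto|path_facts]. }
  apply hom_trans with (concat (rev_path a) (concat a g)); [apply hom_concat_assoc; path_facts|].
  apply hom_trans with (concat (rev_path a) (concat a h)).
  { apply hom_concat; auto; [apply hom_refl|]; path_facts. }
  apply hom_trans with (concat (concat (rev_path a) a) h).
  { apply hom_sym, hom_concat_assoc; path_facts. }
  apply hom_trans with (concat (const_path (h 0)) h).
  { apply hom_concat; [rewrite <- Eh; apply hom_concat_rev_l; auto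
                      |apply hom_refl; auto|path_facts]. }
  apply hom_concat_const_l; auto.
Qed.

Lemma hom_concat_move_r g h k : is_path g -> is_path h -> g 1 = h 0 ->
  path_homotopic (concat g h) k -> path_homotopic g (concat k (rev_path h)).
Proof.
  intros Hg Hh E H.
  apply hom_trans with (concat g (const_path (g 1))); [apply hom_sym, hom_concat_const_r; auto|].
  apply hom_trans with (concat g (concat h (rev_path h))).
  { apply hom_concat; [apply hom_refl; auto|rewrite E; apply hom_sym, hom_concat_rev_r; auto|].
    path_facts. }
  apply hom_trans with (concat (concat g h) (rev_path h)).
  { apply hom_sym, hom_concat_assoc; path_facts. }
  apply hom_concat; auto; [apply hom_refl|]; path_facts.
Qed.

Lemma hom_of_concat_rev_trivial g h : is_path g -> is_path h -> g 1 = h 1 ->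
  path_homotopic (concat g (rev_path h)) (const_path (g 0)) -> path_homotopic g h.
Proof.
  intros Hg Hh E H.
  assert (E' : g 1 = rev_path h 0) by (rewrite rev_path_0; auto).
  pose proof (hom_concat_move_r g (rev_path h) _ Hg (rev_path_path h Hh) E' H) as H2.
  rewrite rev_pathK in H2.
  apply hom_trans with (1 := H2).
  destruct (hom_ends _ _ H) as [_ [_ [_ E1]]]. rewrite concat_1, rev_path_1 in E1.
  unfold const_path in E1. rewrite E1. apply hom_concat_const_l; auto.
Qed.

Lemma null_of_conj_trivial c l : is_path c -> is_path l -> c 0 = l 0 -> l 1 = l 0 ->
  path_homotopic (const_path (c 1)) (concat (concat (rev_path c) l) c) ->
  path_homotopic l (const_path (l 0)).
Proof.
  intros Hc Hl E0 E1 H. apply hom_sym in H.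
  assert (Hrl : is_path (concat (rev_path c) l)) by (path_facts; congruence).
  assert (E2 : concat (rev_path c) l 1 = c 0) by (rewrite concat_1; congruence).
  pose proof (hom_concat_move_r _ c _ Hrl Hc E2 H) as H2.
  apply (hom_concat_cancel_l (rev_path c)); path_facts; try congruence.
  apply hom_trans with (1 := H2).
  apply hom_trans with (rev_path c).
  { unfold const_path at 1. rewrite <- (rev_path_0 c). apply hom_concat_const_l. path_facts. }
  rewrite <- E0, <- (rev_path_1 c). apply hom_sym, hom_concat_const_r. path_facts.
Qed.

Lemma hom_conj_of_null c l l' : is_path c -> c 0 = l 0 -> c 1 = l' 0 ->
  path_homotopic l (const_path (l 0)) -> path_homotopic l' (const_path (l' 0)) ->
  path_homotopic l' (concat (concat (rev_path c) l) c).
Proof.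
  intros Hc E0 E1 Hl Hl'.
  destruct (hom_ends _ _ Hl) as [Pl [_ [_ El]]].
  apply hom_trans with (1 := Hl'). apply hom_sym.
  apply hom_trans with (concat (concat (rev_path c) (const_path (l 0))) c).
  { apply hom_concat; [apply hom_concat; [apply hom_refl|auto|]|apply hom_refl|]; path_facts;
      try congruence.
    rewrite <- El, E0. reflexivity. }
  apply hom_trans with (concat (rev_path c) c).
  { apply hom_concat; [|apply hom_refl; auto|].
    - rewrite <- E0, <- (rev_path_1 c). apply hom_concat_const_r. path_facts.
    - rewrite concat_1. unfold const_path. congruence. }
  rewrite <- E1. apply hom_concat_rev_l; auto.
Qed.

End Groupoid.

Section SquareHomotopies.
Context {X : Top}.
Variable K : R -> R -> X.
Hypothesis K_cont : jointly_continuous K.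

Definition partial_path (s t : R) : R -> X := fun u => K s (segment 0 t u).

Lemma partial_path_path s t : I01 s -> I01 t -> is_path (partial_path s t).
Proof. intros Is It. apply (square_path K (fun _ => s) (segment 0 t)); auto; interval_facts. Qed.

Lemma partial_path_0 s t : partial_path s t 0 = K s 0.
Proof. unfold partial_path. rewrite segment_0. reflexivity. Qed.

Lemma partial_path_1 s t : partial_path s t 1 = K s t.
Proof. unfold partial_path. rewrite segment_1. reflexivity. Qed.

Lemma partial_path_full s : partial_path s 1 = fun u => K s u.
Proof. apply functional_extensionality; intro u. unfold partial_path, segment. f_equal; ring. Qed.

Variable x : X.
Hypothesis K_bottom : forall s, I01 s -> K s 0 = x.

Lemma partial_path_zero s : I01 s -> partial_path s 0 = const_path x.
Proof.
  intros Is. apply functional_extensionality; intro u. unfold partial_path, segment, const_path.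
  rewrite <- (K_bottom s Is). f_equal; ring.
Qed.

(* Both sides follow [K] along a path in the square from [(s,0)] to [(s',t')]. *)
Lemma partial_path_step s t s' t' : I01 s -> I01 t -> I01 s' -> I01 t' ->
  path_homotopic (partial_path s' t')
    (concat (partial_path s t) (fun u => K (segment s s' u) (segment t t' u))).
Proof.
  intros Is It Is' It'.
  apply hom_trans with (concat (const_path x) (partial_path s' t')).
  { replace x with (partial_path s' t' 0) at 1 by (rewrite partial_path_0; auto).
    apply hom_sym, hom_concat_const_l, partial_path_path; auto. }
  apply hom_ext_l with
    (fun u => K (@concat R_top (segment s s') (fun _ => s') u)
                (@concat R_top (fun _ => 0) (segment 0 t') u)).
  apply hom_ext_r with
    (fun u => K (@concat R_top (fun _ => s) (segment s s') u)
                (@concat R_top (segment 0 t) (segment t t') u)).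
  - apply square_homotopic; auto; interval_facts.
  - intros u Iu. unfold concat. destruct (Rle_dec u (1/2)); reflexivity.
  - intros u Iu. unfold concat, const_path, partial_path. destruct (Rle_dec u (1/2)); auto.
    apply K_bottom, segment_I01, I01_double; auto.
Qed.

(* Push the row [s] to the boundary of the square, where [K] is constant. *)
Lemma row_null s : I01 s -> (forall s, I01 s -> K s 1 = x) -> (forall t, I01 t -> K 1 t = x) ->
  path_homotopic (fun u => K s u) (const_path x).
Proof.
  intros Is K_top K_right.
  apply hom_ext_r with
    (fun u => K (@concat R_top (@concat R_top (segment s 1) (fun _ => 1)) (segment 1 s) u)
                (@concat R_top (@concat R_top (fun _ => 0) (segment 0 1)) (fun _ => 1) u)).
  - apply (square_homotopic K (fun _ => s) (fun u => u)); auto; interval_facts.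
  - intros u Iu. unfold concat, const_path. destruct (Rle_dec u (1/2)) as [Hu|Hu].
    + destruct (Rle_dec (2 * u) (1/2)).
      * apply K_bottom, segment_I01; auto using I01_1, I01_double.
      * apply K_right, segment_I01; auto using I01_0, I01_1, I01_double_sub, I01_double.
    + apply K_top, segment_I01; auto using I01_1, I01_double_sub.
Qed.

End SquareHomotopies.

(** * Path connectivity and good open sets *)

Lemma open_of_nbhds {X : Top} (A : X -> Prop) :
  (forall x, A x -> exists W, is_open W /\ W x /\ forall y, W y -> A y) -> is_open A.
Proof.
  intros H.
  replace A with (fun x => exists U, (is_open U /\ forall y, U y -> A y) /\ U x).
  - apply open_union. intros U [? ?]; auto.
  - apply functional_extensionality; intro x. apply propositional_extensionality. split.
    + intros [U [[_ HU] Ux]]; auto.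
    + intros Ax. destruct (H x Ax) as [W [oW [Wx HW]]]. exists W; auto.
Qed.

Lemma path_from_to_concat {X : Top} (g h : R -> X) a b c :
  path_from_to g a b -> path_from_to h b c -> path_from_to (concat g h) a c.
Proof.
  intros [Pg [g0 g1]] [Ph [h0 h1]].
  split; [apply concat_path; auto; congruence|]. rewrite concat_0, concat_1; auto.
Qed.

Lemma path_from_to_rev {X : Top} (g : R -> X) a b :
  path_from_to g a b -> path_from_to (rev_path g) b a.
Proof.
  intros [Pg [g0 g1]]. split; [apply rev_path_path; auto|]. rewrite rev_path_0, rev_path_1; auto.
Qed.

(* The points joined to [x0] form an open set with open complement. *)
Lemma connected_paths_from {X : Top} (x0 : X) : connected X -> locally_path_connected X ->
  forall z, exists g, path_from_to g x0 z.
Proof.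
  intros [_ Hc] Hl.
  set (A := fun z : X => exists g, path_from_to g x0 z).
  assert (Hloc : forall z, exists W, is_open W /\ W z /\ forall y, W y -> (A y <-> A z)).
  { intros z. destruct (Hl z (fun _ => True) (open_full X) I) as [W [oW [Wz [_ pW]]]].
    exists W; split; auto; split; auto. intros y Wy.
    destruct (pW z y Wz Wy) as [e [He _]].
    split; intros [g Hg]; eexists;
      eauto using path_from_to_concat, path_from_to_rev. }
  intros z. apply NNPP. intro Hz.
  apply (Hc A (fun y => ~ A y)).
  - apply open_of_nbhds. intros x Ax. destruct (Hloc x) as [W [oW [Wx HW]]].
    exists W; split; auto; split; auto. intros y Wy. apply HW; auto.
  - apply open_of_nbhds. intros x Ax. destruct (Hloc x) as [W [oW [Wx HW]]].
    exists W; split; auto; split; auto. intros y Wy Ay. apply Ax, (HW y Wy); auto.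
  - intros x. apply classic.
  - intros x [H1 H2]; auto.
  - exists x0, (const_path x0). split; [apply const_path_path|split; reflexivity].
  - exists z. auto.
Qed.

Definition rel_simply_connected {X : Top} (W : X -> Prop) : Prop :=
  forall d d', path_in W d -> path_in W d' -> d 0 = d' 0 -> d 1 = d' 1 -> path_homotopic d d'.

Definition good_open {X : Top} (W : X -> Prop) : Prop :=
  is_open W /\ path_connected_set W /\ rel_simply_connected W.

Lemma good_open_nbhd {X : Top} : locally_path_connected X -> semilocally_simply_connected X ->
  forall z : X, exists W, good_open W /\ W z.
Proof.
  intros Hl Hs z. destruct (Hs z) as [U [oU [Uz HU]]].
  destruct (Hl z U oU Uz) as [W [oW [Wz [WU pW]]]].
  exists W; split; auto. split; auto. split; auto.
  intros d d' [Pd Wd] [Pd' Wd'] E0 E1.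
  destruct (pW z (d 0) Wz (Wd 0 I01_0)) as [a [[Pa [a0 a1]] [_ Wa]]].
  (* [a d (a d')^-1] is a loop at [z] inside [U] *)
  set (g := concat a d). set (h := concat a d').
  assert (g1 : g 1 = h 1) by (unfold g, h; rewrite !concat_1; auto).
  assert (g0 : g 0 = z) by (unfold g; rewrite concat_0; auto).
  assert (Ig : path_in W g) by (apply path_in_concat; [split|split|]; auto).
  assert (Ih : path_in W h) by (apply path_in_concat; [split|split|]; auto; congruence).
  apply (hom_concat_cancel_l a); auto; try congruence.
  apply hom_of_concat_rev_trivial; [apply Ig|apply Ih|auto|].
  fold g h. rewrite g0. apply HU.
  - split; [apply concat_path; [apply Ig|apply rev_path_path, Ih|]|].
    + rewrite rev_path_0; auto.
    + rewrite concat_0, concat_1, rev_path_1, g0. unfold h. rewrite concat_0; auto.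
  - apply (path_in_mono W); auto. apply path_in_concat; [|apply path_in_rev|]; auto.
    rewrite rev_path_0; auto.
Qed.

(** * The universal covering *)

Section UniversalCover.
Context {X : Top} (x0 : X).

Definition based_path (g : R -> X) : Prop := is_path g /\ g 0 = x0.

(* A point of the cover is the homotopy class of a path from [x0], encoded as
   the predicate [path_homotopic g]. *)
Definition cover : Type :=
  { c : (R -> X) -> Prop | exists g, based_path g /\ c = path_homotopic g }.

Lemma based_const : based_path (const_path x0).
Proof. split; [apply const_path_path|reflexivity]. Qed.

Definition cover_base : cover :=
  exist _ (path_homotopic (const_path x0)) (ex_intro _ _ (conj based_const eq_refl)).

(* [cls g] is junk ([cover_base]) unless [g] is based at [x0]. *)
Definition cls (g : R -> X) : cover :=
  match excluded_middle_informative (based_path g) with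
  | left H => exist _ (path_homotopic g) (ex_intro _ g (conj H eq_refl))
  | right _ => cover_base
  end.

Definition rep (e : cover) : R -> X :=
  proj1_sig (constructive_indefinite_description _ (proj2_sig e)).

Definition proj (e : cover) : X := rep e 1.

Lemma rep_spec e : based_path (rep e) /\ proj1_sig e = path_homotopic (rep e).
Proof. unfold rep. destruct (constructive_indefinite_description _ _) as [g Hg]. exact Hg. Qed.

Lemma rep_based e : based_path (rep e).
Proof. apply rep_spec. Qed.

Lemma rep_path e : is_path (rep e).
Proof. apply rep_based. Qed.

Lemma proj1_cls g : based_path g -> proj1_sig (cls g) = path_homotopic g.
Proof. intros Hg. unfold cls. destruct (excluded_middle_informative _); [|contradiction]. auto. Qed.

Lemma cls_eq g h : based_path g -> based_path h -> path_homotopic g h -> cls g = cls h.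
Proof.
  intros Hg Hh H. apply eq_sig_hprop; [intros; apply proof_irrelevance|].
  rewrite !proj1_cls by auto.
  apply functional_extensionality; intro k. apply propositional_extensionality.
  split; intro H'; eauto using hom_trans, hom_sym.
Qed.

Lemma cls_inj g h : based_path g -> based_path h -> cls g = cls h -> path_homotopic g h.
Proof.
  intros Hg Hh E. apply (f_equal (@proj1_sig _ _)) in E.
  rewrite !proj1_cls in E by auto. rewrite E. apply hom_refl, Hh.
Qed.

Lemma repK e : cls (rep e) = e.
Proof.
  destruct (rep_spec e) as [Hb Hc]. apply eq_sig_hprop; [intros; apply proof_irrelevance|].
  rewrite proj1_cls; auto.
Qed.

Lemma rep_cls g : based_path g -> path_homotopic (rep (cls g)) g.
Proof.
  intros Hg. apply cls_inj; auto using rep_based. apply repK.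
Qed.

Lemma proj_cls g : based_path g -> proj (cls g) = g 1.
Proof. intros Hg. unfold proj. symmetry. apply (hom_ends _ _ (rep_cls g Hg)). Qed.

Definition extend (e : cover) (d : R -> X) : cover := cls (concat (rep e) d).

Lemma based_extend e d : is_path d -> d 0 = proj e -> based_path (concat (rep e) d).
Proof.
  intros Hd E. destruct (rep_based e) as [Pe Ee].
  split; [apply concat_path; auto|rewrite concat_0; auto].
Qed.

Lemma proj_extend e d : is_path d -> d 0 = proj e -> proj (extend e d) = d 1.
Proof. intros Hd E. unfold extend. rewrite proj_cls, concat_1; auto using based_extend. Qed.

Lemma extend_hom e d d' : path_homotopic d d' -> d 0 = proj e -> extend e d = extend e d'.
Proof.
  intros H E. destruct (hom_ends _ _ H) as [Pd [Pd' [E0 _]]].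
  apply cls_eq; auto using based_extend; [apply based_extend; auto; congruence|].
  apply hom_concat; auto. apply hom_refl, rep_path.
Qed.

Lemma extend_const e : extend e (const_path (proj e)) = e.
Proof.
  transitivity (cls (rep e)); [|apply repK].
  apply cls_eq; auto using based_extend, const_path_path, rep_based.
  apply hom_concat_const_r, rep_path.
Qed.

Lemma extend_concat e d d' : is_path d -> is_path d' -> d 0 = proj e -> d 1 = d' 0 ->
  extend (extend e d) d' = extend e (concat d d').
Proof.
  intros Pd Pd' E1 E2.
  assert (Ed : d' 0 = proj (extend e d)) by (rewrite proj_extend; auto).
  apply cls_eq; auto using based_extend.
  - apply based_extend; [apply concat_path; auto|rewrite concat_0; auto].
  - apply hom_trans with (concat (concat (rep e) d) d').
    + apply hom_concat; [apply rep_cls, based_extend|apply hom_refl|]; auto.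
    + apply hom_concat_assoc; auto using rep_path.
Qed.

Lemma extend_eq_self e d : is_path d -> d 0 = proj e -> extend e d = e ->
  path_homotopic d (const_path (proj e)).
Proof.
  intros Pd E0 E. rewrite <- extend_const in E.
  apply cls_inj in E; auto using based_extend, const_path_path.
  apply (hom_concat_cancel_l (rep e)); auto using rep_path, const_path_path.
Qed.

Definition lift_nbhd (a : cover) (W : X -> Prop) (e : cover) : Prop :=
  exists d, path_in W d /\ d 0 = proj a /\ e = extend a d.

Lemma lift_nbhd_proj a W e : lift_nbhd a W e -> W (proj e).
Proof.
  intros [d [[Pd Wd] [E ->]]]. rewrite proj_extend; auto. apply Wd, I01_1.
Qed.

Lemma lift_nbhd_self a (W : X -> Prop) : W (proj a) -> lift_nbhd a W a.
Proof.
  intros Wa. exists (const_path (proj a)).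
  split; [apply path_in_const; auto|split; [reflexivity|symmetry; apply extend_const]].
Qed.

Lemma lift_nbhd_mono a (U V : X -> Prop) e :
  (forall x, U x -> V x) -> lift_nbhd a U e -> lift_nbhd a V e.
Proof. intros HUV [d [Ud Hd]]. exists d; split; eauto using path_in_mono. Qed.

Lemma lift_nbhd_trans a W e f : lift_nbhd a W e -> lift_nbhd e W f -> lift_nbhd a W f.
Proof.
  intros [d1 [[P1 W1] [E1 ->]]] [d2 [[P2 W2] [E2 ->]]].
  rewrite proj_extend in E2 by auto.
  exists (concat d1 d2). split; [apply path_in_concat; [split|split|]; auto|].
  split; [rewrite concat_0; auto|apply extend_concat; auto].
Qed.

Section RelSimplyConnected.
Variable W : X -> Prop.
Hypothesis W_rsc : rel_simply_connected W.

Lemma lift_nbhd_inj a e f : lift_nbhd a W e -> lift_nbhd a W f -> proj e = proj f -> e = f.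
Proof.
  intros [d1 [[P1 W1] [E1 ->]]] [d2 [[P2 W2] [E2 ->]]] Ep.
  rewrite !proj_extend in Ep by auto.
  apply extend_hom; auto. apply W_rsc; [split|split|congruence|]; auto.
Qed.

Lemma lift_nbhd_shift a e f : lift_nbhd a W e -> lift_nbhd a W f -> lift_nbhd e W f.
Proof.
  intros [d1 [[P1 W1] [E1 ->]]] [d2 [[P2 W2] [E2 ->]]].
  set (g := concat (rev_path d1) d2).
  assert (Ig : path_in W g).
  { apply path_in_concat; [apply path_in_rev; split|split|]; auto.
    rewrite rev_path_1; congruence. }
  assert (g0 : g 0 = d1 1) by (unfold g; rewrite concat_0, rev_path_0; auto).
  exists g. split; [auto|split; [rewrite proj_extend; auto|]].
  rewrite extend_concat; auto; [|apply Ig].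
  apply extend_hom; auto.
  apply W_rsc; [split|apply path_in_concat; [split| |]|..]; auto.
  - rewrite concat_0; congruence.
  - unfold g. rewrite !concat_1; auto.
Qed.

End RelSimplyConnected.

Definition cover_open (O : cover -> Prop) : Prop :=
  forall e, O e -> exists W, is_open W /\ W (proj e) /\ forall f, lift_nbhd e W f -> O f.

Lemma cover_open_full : cover_open (fun _ => True).
Proof. intros e _. exists (fun _ => True). split; [apply open_full|auto]. Qed.

Lemma cover_open_inter U V : cover_open U -> cover_open V -> cover_open (fun e => U e /\ V e).
Proof.
  intros HU HV e [Ue Ve].
  destruct (HU e Ue) as [W1 [o1 [w1 H1]]]. destruct (HV e Ve) as [W2 [o2 [w2 H2]]].
  exists (fun x => W1 x /\ W2 x). split; [apply open_inter; auto|split; [auto|]].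
  intros f Hf. split; [apply H1|apply H2]; revert Hf; apply lift_nbhd_mono; tauto.
Qed.

Lemma cover_open_union (F : (cover -> Prop) -> Prop) :
  (forall U, F U -> cover_open U) -> cover_open (fun e => exists U, F U /\ U e).
Proof.
  intros HF e [U [FU Ue]]. destruct (HF U FU e Ue) as [W [o [w H]]].
  exists W; split; auto; split; auto. intros f Hf. exists U; auto.
Qed.

Definition cover_top : Top :=
  MkTop cover cover_open cover_open_full cover_open_inter cover_open_union.

Lemma lift_nbhd_open a W : is_open W -> @is_open cover_top (lift_nbhd a W).
Proof.
  intros oW e Ne. exists W; split; auto. split; [eapply lift_nbhd_proj; eauto|].
  intros f Nf. apply (lift_nbhd_trans a W e); auto.
Qed.

Lemma proj_continuous : @continuous cover_top X proj.
Proof.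
  intros V oV e Ve. exists V. split; auto. split; auto. apply lift_nbhd_proj.
Qed.

Section Sheets.
Variables (V : X -> Prop) (anchor : X -> cover).
Hypothesis V_open : is_open V.
Hypothesis V_rsc : rel_simply_connected V.
Hypothesis anchor_reach :
  forall z, V z -> exists d, path_in V d /\ d 0 = proj (anchor z) /\ d 1 = z.
Hypothesis anchor_along_paths :
  forall z eta, V z -> path_in V eta -> eta 0 = z -> anchor (eta 1) = anchor z.

Definition sheet_section (z : X) : cover :=
  extend (anchor z) (epsilon (inhabits (const_path x0))
                       (fun d => path_in V d /\ d 0 = proj (anchor z) /\ d 1 = z)).

Lemma sheet_section_spec z : V z ->
  lift_nbhd (anchor z) V (sheet_section z) /\ proj (sheet_section z) = z.
Proof.
  intros Vz.
  destruct (epsilon_spec (inhabits (const_path x0))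
              (fun d => path_in V d /\ d 0 = proj (anchor z) /\ d 1 = z) (anchor_reach z Vz))
    as [[Pd Wd] [E0 E1]].
  split; [eexists; split; [split|split]; eauto|].
  unfold sheet_section. rewrite proj_extend; auto.
Qed.

Lemma sheet_section_along z eta : V z -> path_in V eta -> eta 0 = z ->
  sheet_section (eta 1) = extend (sheet_section z) eta.
Proof.
  intros Vz Ve E0. assert (Veta := Ve). destruct Veta as [Pe We].
  destruct (sheet_section_spec z Vz) as [[d [Vd [d0 Ed]]] Pz].
  destruct (sheet_section_spec (eta 1) (We 1 I01_1)) as [[d' [Vd' [d'0 Ed']]] Peta].
  rewrite (anchor_along_paths z eta) in d'0, Ed' by auto.
  assert (d1 : d 1 = z) by (rewrite <- Pz, Ed, proj_extend; auto; apply Vd).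
  assert (d'1 : d' 1 = eta 1) by (rewrite <- Peta, Ed', proj_extend; auto; apply Vd').
  rewrite Ed, Ed', extend_concat; try apply Vd; auto; try congruence.
  apply extend_hom; auto. apply V_rsc; auto.
  - apply path_in_concat; auto. congruence.
  - rewrite concat_0. congruence.
  - rewrite concat_1. auto.
Qed.

Lemma sheet_section_continuous : locally_path_connected X ->
  @continuous_on X cover_top V sheet_section.
Proof.
  intros Hl z Vz O oO Oz.
  destruct (oO _ Oz) as [W1 [o1 [w1 H1]]].
  destruct (sheet_section_spec z Vz) as [_ Pz]. rewrite Pz in w1.
  destruct (Hl z (fun x => V x /\ W1 x) (open_inter X _ _ V_open o1) (conj Vz w1))
    as [W2 [o2 [w2 [W2s pW2]]]].
  exists W2; split; auto; split; auto.
  intros z' W2z' Vz'.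
  destruct (pW2 z z' w2 W2z') as [eta [[Pe [e0 e1]] Ie]]. subst z'.
  rewrite (sheet_section_along z eta); auto.
  - apply H1. exists eta. split; [|split; congruence].
    revert Ie. apply path_in_mono. intros x Hx. apply W2s; auto.
  - revert Ie. apply path_in_mono. intros x Hx. apply W2s; auto.
Qed.

End Sheets.

Lemma good_open_evenly_covered (W : X -> Prop) : locally_path_connected X -> good_open W ->
  @evenly_covered cover_top X proj W.
Proof.
  intros Hl [oW [pW G]].
  exists (fun S => exists a, W (proj a) /\ S = lift_nbhd a W).
  split; [|split; [|split]].
  - intros S [a [Wa ->]]. apply lift_nbhd_open; auto.
  - intros S S' [a [Wa ->]] [b [Wb ->]].
    destruct (classic (exists e, lift_nbhd a W e /\ lift_nbhd b W e)) as [[e [Ne Ne']]|Hn].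
    + left. intros f; split; intros Nf.
      * apply (lift_nbhd_trans b W e); auto. apply (lift_nbhd_shift W G a); auto.
      * apply (lift_nbhd_trans a W e); auto. apply (lift_nbhd_shift W G b); auto.
    + right. intros f [H1 H2]. apply Hn. exists f; auto.
  - intros e; split.
    + intros We. exists (lift_nbhd e W). split; [exists e; auto|apply lift_nbhd_self; auto].
    + intros [S [[a [Wa ->]] Se]]. eapply lift_nbhd_proj; eauto.
  - intros S [a [Wa ->]]. exists (sheet_section W (fun _ => a)).
    assert (reach : forall z, W z -> exists d, path_in W d /\ d 0 = proj a /\ d 1 = z).
    { intros z Wz. destruct (pW _ _ Wa Wz) as [d [[Pd [d0 d1]] Wd]]. eauto. }
    split; [|split].
    + apply (sheet_section_continuous W (fun _ => a)); auto.
    + intros z Wz. apply (sheet_section_spec W (fun _ => a)); auto.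
    + intros e Ne. apply (lift_nbhd_inj W G a); auto.
      * apply (sheet_section_spec W (fun _ => a)); auto. eapply lift_nbhd_proj; eauto.
      * apply (sheet_section_spec W (fun _ => a)); auto. eapply lift_nbhd_proj; eauto.
Qed.

Lemma proj_surjective : connected X -> locally_path_connected X -> forall z, exists e, proj e = z.
Proof.
  intros Hc Hl z. destruct (connected_paths_from x0 Hc Hl z) as [g [Pg [g0 g1]]].
  exists (cls g). rewrite proj_cls; [auto|split; auto].
Qed.

Lemma proj_covering_map : connected X -> locally_path_connected X ->
  semilocally_simply_connected X -> @covering_map cover_top X proj.
Proof.
  intros Hc Hl Hs. split; [apply proj_continuous|split; [apply proj_surjective; auto|]].
  intros z. destruct (good_open_nbhd Hl Hs z) as [W [GW Wz]].
  exists W. split; [apply GW|split; auto]. apply good_open_evenly_covered; auto.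
Qed.

(* Each point is anchored at a lift of some point of its path component in [V]. *)
Lemma rel_simply_connected_section (V : X -> Prop) :
  connected X -> locally_path_connected X -> is_open V -> rel_simply_connected V ->
  exists s : X -> cover, @continuous_on X cover_top V s /\ forall z, V z -> proj (s z) = z.
Proof.
  intros Hc Hl oV G.
  set (reaches := fun z a => exists d, path_in V d /\ d 0 = proj a /\ d 1 = z).
  set (anchor := fun z => epsilon (inhabits cover_base) (reaches z)).
  assert (reach : forall z, V z -> reaches z (anchor z)).
  { intros z Vz. apply epsilon_spec.
    destruct (proj_surjective Hc Hl z) as [a Ea].
    exists a, (const_path z). split; [apply path_in_const; auto|split; auto]. }
  exists (sheet_section V anchor). split.
  - apply sheet_section_continuous; auto.
    intros z eta Vz Ve E0. unfold anchor. f_equal.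
    apply functional_extensionality; intro a. apply propositional_extensionality.
    unfold reaches. split; intros [d [Vd [d0 d1]]].
    + exists (concat d (rev_path eta)).
      split; [apply path_in_concat; [|apply path_in_rev|]; auto; rewrite rev_path_0; auto|].
      rewrite concat_0, concat_1, rev_path_1; auto.
    + exists (concat d eta).
      split; [apply path_in_concat; auto; congruence|].
      rewrite concat_0, concat_1; auto.
  - intros z Vz. apply sheet_section_spec; auto.
Qed.

Lemma extend_partial_jointly_continuous e (K : R -> R -> X) :
  jointly_continuous K -> (forall s, I01 s -> K s 0 = proj e) ->
  @jointly_continuous cover_top (fun s t => extend e (partial_path K s t)).
Proof.
  intros HK Kb s t Is It O oO Oz.
  assert (P0 : forall s t, I01 s -> partial_path K s t 0 = proj e)
    by (intros; rewrite partial_path_0; auto).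
  destruct (oO _ Oz) as [W [oW [Wz HW]]].
  rewrite proj_extend, partial_path_1 in Wz by auto using partial_path_path.
  destruct (HK s t Is It W oW Wz) as [d [dp Hd]].
  exists d; split; auto. intros s' t' Is' It' Hs Ht.
  set (diag := fun u => K (segment s s' u) (segment t t' u)).
  assert (Idiag : path_in W diag).
  { split; [apply square_path; auto; interval_facts|].
    intros u Iu. apply Hd; auto using segment_I01, segment_near. }
  (* the lift at [(s',t')] extends the lift at [(s,t)] by the diagonal path in [W] *)
  rewrite (extend_hom e _ _ (partial_path_step K HK (proj e) Kb s t s' t' Is It Is' It'))
    by auto.
  rewrite <- extend_concat; auto using partial_path_path; [|apply Idiag|].
  - apply HW. exists diag. split; auto.
    split; [|reflexivity]. rewrite proj_extend by auto using partial_path_path.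
    unfold diag. rewrite partial_path_1, !segment_0. reflexivity.
  - unfold diag. rewrite partial_path_1, !segment_0. reflexivity.
Qed.

Lemma cover_path_connected : path_connected cover_top.
Proof.
  set (b0 := cls (const_path x0)).
  split; [constructor; exact b0|].
  assert (b0_proj : proj b0 = x0) by (apply proj_cls, based_const).
  (* lift [rep a] starting at [b0] *)
  assert (Lift : forall a : cover, exists L, @path_from_to cover_top L b0 a).
  { intros a. destruct (rep_based a) as [Pa a0].
    set (K := fun (_ : R) t => rep a t).
    assert (HK : jointly_continuous K) by (apply path_jointly_continuous; auto).
    assert (Kb : forall s, I01 s -> K s 0 = proj b0) by (intros; unfold K; congruence).
    exists (fun t => extend b0 (partial_path K 0 t)).
    split.
    { apply (jointly_continuous_row (X := cover_top)
               (fun s t => extend b0 (partial_path K s t)) 0); [|exact I01_0].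
      apply extend_partial_jointly_continuous; auto. }
    split.
    - rewrite (partial_path_zero K (proj b0) Kb 0 I01_0). apply extend_const.
    - rewrite partial_path_full. unfold K. fold (rep a).
      transitivity (cls (rep a)); [|apply repK].
      apply cls_eq; [apply based_extend; auto; now rewrite a0, b0_proj|apply rep_based|].
      apply hom_trans with (concat (const_path x0) (rep a)).
      + apply hom_concat; [apply rep_cls, based_const|apply hom_refl; auto|].
        change (proj b0 = rep a 0). congruence.
      + rewrite <- a0. apply hom_concat_const_l; auto. }
  intros a b _ _. destruct (Lift a) as [La Ha]. destruct (Lift b) as [Lb Hb].
  assert (Hab : @path_from_to cover_top (concat (rev_path La) Lb) a b).
  { apply (path_from_to_concat (X := cover_top) _ _ _ b0); auto using path_from_to_rev. }
  exists (concat (rev_path La) Lb). split; [exact Hab|split; [apply Hab|auto]].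
Qed.

Lemma extend_ext e d d' : is_path d -> d 0 = proj e -> (forall t, I01 t -> d t = d' t) ->
  extend e d = extend e d'.
Proof. intros Pd E H. apply extend_hom; auto. apply (hom_ext_r d d); auto using hom_refl. Qed.

Section Lifting.
Hypothesis X_lpc : locally_path_connected X.
Hypothesis X_slsc : semilocally_simply_connected X.

Lemma path_lift_unique (lam L : R -> cover) : @is_path cover_top lam -> @is_path cover_top L ->
  lam 0 = L 0 -> (forall t, I01 t -> proj (lam t) = proj (L t)) -> forall t, I01 t -> lam t = L t.
Proof.
  intros Plam PL E0 Ep. apply I01_connected; auto.
  intros t It. destruct (good_open_nbhd X_lpc X_slsc (proj (lam t))) as [W [[oW [_ G]] Wt]].
  assert (Nl : lift_nbhd (lam t) W (lam t)) by (apply lift_nbhd_self; auto).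
  assert (NL : lift_nbhd (L t) W (L t)) by (apply lift_nbhd_self; rewrite <- Ep; auto).
  destruct (Plam t It _ (lift_nbhd_open (lam t) W oW) Nl) as [d1 [d1p H1]].
  destruct (PL t It _ (lift_nbhd_open (L t) W oW) NL) as [d2 [d2p H2]].
  exists (Rmin d1 d2). split; [apply Rmin_pos; auto|].
  intros t' It' Ht. pose proof (Rmin_l d1 d2). pose proof (Rmin_r d1 d2).
  assert (Nl' : lift_nbhd (lam t) W (lam t')) by (apply H1; auto; lra).
  assert (NL' : lift_nbhd (L t) W (L t')) by (apply H2; auto; lra).
  split; intro HE.
  - rewrite <- HE in NL'.
    apply (lift_nbhd_inj W G (lam t)); auto.
    apply (lift_nbhd_trans (lam t) W (lam t')); auto.
    apply (lift_nbhd_shift W G (L t)); auto.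
  - rewrite <- HE in NL'. apply (lift_nbhd_inj W G (lam t)); auto.
Qed.

Lemma path_eq_extend_proj e (lam : R -> cover) : @is_path cover_top lam -> lam 0 = e ->
  forall t, I01 t -> lam t = extend e (partial_path (fun _ t => proj (lam t)) 0 t).
Proof.
  intros Plam E0.
  set (K := fun (_ : R) t => proj (lam t)).
  assert (HK : jointly_continuous K)
    by (apply path_jointly_continuous, (continuous_path (X := cover_top));
        auto using proj_continuous).
  assert (Kb : forall s, I01 s -> K s 0 = proj e) by (intros; unfold K; congruence).
  apply path_lift_unique; auto.
  - apply (jointly_continuous_row (X := cover_top) (fun s t => extend e (partial_path K s t)) 0);
      auto using extend_partial_jointly_continuous, I01_0.
  - rewrite (partial_path_zero K (proj e) Kb 0 I01_0), extend_const; auto.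
  - intros t It. rewrite proj_extend, partial_path_1; auto using partial_path_path, I01_0.
    rewrite partial_path_0; auto using I01_0.
Qed.

Lemma proj_loop_null e (lam : R -> cover) : @is_loop_at cover_top lam e ->
  path_homotopic (fun t => proj (lam t)) (const_path (proj e)).
Proof.
  intros [Plam [E0 E1]].
  assert (Psig : is_path (fun t => proj (lam t)))
    by (apply (continuous_path (X := cover_top)); auto using proj_continuous).
  pose proof (path_eq_extend_proj e lam Plam E0 1 I01_1) as H1.
  rewrite partial_path_full, E1 in H1.
  apply extend_eq_self; auto; congruence.
Qed.

Lemma cover_loop_null e (lam : R -> cover) : @is_loop_at cover_top lam e ->
  @path_homotopic cover_top lam (const_path e).
Proof.
  intros Hlam. destruct Hlam as [Plam [E0 E1]].
  destruct (proj_loop_null e lam (conj Plam (conj E0 E1))) as [K [HK [K0 [K1 Kb]]]].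
  assert (Kbot : forall s, I01 s -> K s 0 = proj e)
    by (intros s Is; rewrite (proj1 (Kb s Is)); congruence).
  assert (Ktop : forall s, I01 s -> K s 1 = proj e)
    by (intros s Is; rewrite (proj2 (Kb s Is)); congruence).
  (* lift the null-homotopy of the projected loop *)
  exists (fun s t => extend e (partial_path K s t)).
  split; [apply extend_partial_jointly_continuous; auto|split; [|split]].
  - intros t It. rewrite (path_eq_extend_proj e lam Plam E0 t It).
    apply extend_ext; auto using partial_path_path, I01_0.
    + rewrite partial_path_0; auto using I01_0.
    + intros u Iu. unfold partial_path. rewrite K0; auto using segment_I01, I01_0.
  - intros t It. rewrite <- (extend_const e) at 2.
    apply extend_ext; auto using partial_path_path, I01_1.
    + rewrite partial_path_0; auto using I01_0, I01_1.
    + intros u Iu. unfold partial_path. rewrite K1; auto using segment_I01, I01_0.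
  - intros s Is. rewrite E0, E1. split.
    + rewrite (partial_path_zero K (proj e) Kbot s Is). apply extend_const.
    + rewrite partial_path_full. rewrite <- (extend_const e) at 2. apply extend_hom; auto.
      apply (row_null K HK (proj e)); auto.
Qed.

End Lifting.

Lemma proj_universal_covering : connected X -> locally_path_connected X ->
  semilocally_simply_connected X -> @universal_covering cover_top X proj.
Proof.
  intros Hc Hl Hs. split; [apply proj_covering_map; auto|].
  split; [apply cover_path_connected|]. intros e lam. apply cover_loop_null; auto.
Qed.

End UniversalCover.

(** * Diagonal conditions and sections *)

Lemma fst_continuous {X Y : Top} : @continuous (prodTop X Y) X fst.
Proof.
  intros V HV p Vp. exists V, (fun _ => True). repeat split; auto using open_full.
Qed.

Lemma snd_continuous {X Y : Top} : @continuous (prodTop X Y) Y snd.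
Proof.
  intros V HV p Vp. exists (fun _ => True), V. repeat split; auto using open_full.
Qed.

Lemma pair_path {X Y : Top} (f : R -> X) (g : R -> Y) : is_path f -> is_path g ->
  @is_path (prodTop X Y) (fun t => (f t, g t)).
Proof.
  intros Hf Hg t It V HV Vt. destruct (HV _ Vt) as [A [B [oA [oB [Af [Bg HAB]]]]]].
  destruct (Hf t It A oA Af) as [d1 [d1p H1]]. destruct (Hg t It B oB Bg) as [d2 [d2p H2]].
  exists (Rmin d1 d2). split; [apply Rmin_pos; auto|].
  intros t' It' Ht. pose proof (Rmin_l d1 d2). pose proof (Rmin_r d1 d2).
  apply HAB; [apply H1|apply H2]; auto; lra.
Qed.

Lemma slice_open {X Y : Top} (W : prodTop X Y -> Prop) (y : Y) :
  is_open W -> is_open (fun x => W (x, y)).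
Proof.
  intros oW. apply open_of_nbhds. intros x Wx.
  destruct (oW (x, y) Wx) as [A [B [oA [oB [Ax [By HAB]]]]]].
  exists A. split; [auto|split; [auto|]]. intros x' Ax'. apply (HAB (x', y)); auto.
Qed.

Lemma slice_rel_simply_connected {X : Top} (U : prodTop X X -> Prop) (x0 : X) :
  (forall u, U u -> diag_conj_condition X U u) -> rel_simply_connected (fun x => U (x, x0)).
Proof.
  intros HU d d' [Pd Ud] [Pd' Ud'] E0 E1.
  apply hom_of_concat_rev_trivial; auto.
  set (l := concat d (rev_path d')).
  assert (Il : path_in (fun x => U (x, x0)) l).
  { apply path_in_concat; [split|apply path_in_rev; split|]; auto. rewrite rev_path_0; auto. }
  assert (l0 : l 0 = d 0) by (unfold l; rewrite concat_0; auto).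
  assert (l1 : l 1 = d 0) by (unfold l; rewrite concat_1, rev_path_1; auto).
  destruct (HU (d 0, x0) (Ud 0 I01_0)) as [c [[Pc [c0 c1]] Hc]]. simpl in c0, c1.
  rewrite <- l0. apply (null_of_conj_trivial c l Pc (proj1 Il)); try congruence.
  rewrite c1. apply (Hc (fun t => (l t, x0))).
  - split; [apply pair_path; [apply Il|apply const_path_path]|]. simpl. rewrite l0, l1; auto.
  - split; [apply pair_path; [apply Il|apply const_path_path]|]. apply Il.
Qed.

Lemma cat1_le_of_TCD_le (X : Top) : connected X -> locally_path_connected X ->
  semilocally_simply_connected X -> forall n, TCD_le X n -> cat1_le X n.
Proof.
  intros Hc Hl Hs n [U [oU [cU dU]]]. destruct Hc as [[x0] Hc'].
  assert (Hc : connected X) by (split; [constructor|]; auto).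
  exists (cover_top x0), (proj x0). split; [apply proj_universal_covering; auto|].
  exists (fun i x => U i (x, x0)). split; [|split].
  - intros i Hi. apply slice_open; auto.
  - intros z. destruct (cU (z, x0)) as [i [Hi Ui]]. exists i; auto.
  - intros i Hi. apply rel_simply_connected_section; auto.
    + apply slice_open; auto.
    + apply slice_rel_simply_connected. apply dU; auto.
Qed.

Lemma diag_conj_of_universal_section (X E : Top) (p : E -> prodTop X X)
    (U : prodTop X X -> Prop) (s : prodTop X X -> E) (u : prodTop X X) :
  universal_covering p -> continuous_on U s -> (forall z, U z -> p (s z) = z) -> U u ->
  diag_conj_condition X U u.
Proof.
  intros [[Pc [Psurj _]] [[_ PE] Eloops]] Cs Ps Uu.
  destruct (Psurj u) as [e1 pe1]. destruct (Psurj (snd u, snd u)) as [e2 pe2].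
  destruct (PE e1 e2 I I) as [g [[Pg [g0 g1]] _]].
  assert (Pc' : is_path (fun t => fst (p (g t))))
    by (apply (continuous_path (X := prodTop X X)); auto using fst_continuous;
        apply continuous_path; auto).
  exists (fun t => fst (p (g t))). split; [split; [auto|simpl; rewrite g0, g1, pe1, pe2; auto]|].
  intros l [Pl [l0 l1]] Il.
  assert (Hsl : path_homotopic (fun t => s (l t)) (const_path (s u))).
  { apply Eloops. split; [apply (continuous_on_path U); auto|]. rewrite l0, l1. split; auto. }
  assert (Hnull : forall f : prodTop X X -> X, continuous f ->
            path_homotopic (fun t => f (l t)) (const_path (f (l 0)))).
  { intros f Cf.
    apply (hom_map (fun x => f (p x))) in Hsl; [|intros V HV; exact (Pc _ (Cf V HV))].
    apply hom_ext_l with (fun t => f (p (s (l t)))).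
    2:{ intros t It. rewrite Ps; auto. apply Il; auto. }
    apply hom_ext_r with (1 := Hsl). intros t It. unfold const_path. rewrite Ps, l0; auto. }
  apply hom_conj_of_null; auto.
  - rewrite g0, pe1, l0. auto.
  - rewrite g1, pe2, l0. auto.
  - apply (Hnull fst fst_continuous).
  - apply (Hnull snd snd_continuous).
Qed.

Lemma TCD_le_of_cat1_le_prod (X : Top) n : cat1_le (prodTop X X) n -> TCD_le X n.
Proof.
  intros [E [p [Hp [U [oU [cU sU]]]]]].
  exists U. split; [auto|split; [auto|]].
  intros i Hi u Uu. destruct (sU i Hi) as [s [Cs Ps]].
  apply (diag_conj_of_universal_section X E p (U i) s); auto.
Qed.

Theorem mainTheorem8 (X : Top) :
  connected X -> locally_path_connected X -> semilocally_simply_connected X ->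
  (forall n : nat, TCD_le X n -> cat1_le X n) /\
  (forall n : nat, cat1_le (prodTop X X) n -> TCD_le X n).
Proof.
  intros Hc Hl Hs. split.
  - apply cat1_le_of_TCD_le; auto.
  - apply TCD_le_of_cat1_le_prod.
Qed.
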